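(* Let $n$ be even and $F_4(X)=X^{2^n-2}$ on $\mathbb{F}_{2^n}$. For $a,b\in\mathbb{F}_{2^n}^*$, $\mathrm{FBCT}_{F_4}(a,b)=2^n$ if $a=b$; $=4$ if $(a/b)^2+a/b+1=0$; and $=0$ otherwise.
   Context: For $F:\mathbb{F}_{2^n}\to\mathbb{F}_{2^n}$ and $a,b\in\mathbb{F}_{2^n}$, $\mathrm{FBCT}_F(a,b)=|\{X\in\mathbb{F}_{2^n}: F(X+a+b)+F(X+b)+F(X+a)+F(X)=0\}|$. *)

From mathcomp Require Import all_boot all_algebra all_field.
Set Implicit Arguments. Unset Strict Implicit. Unset Printing Implicit Defensive.
Import GRing.Theory.
Local Open Scope ring_scope.

Definition FBCT (F : finFieldType) (G : F -> F) (a b : F) : nat :=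
  #|[set X : F | G (X + a + b) + G (X + b) + G (X + a) + G X == 0]|.

(* The power map X |-> X^(2^n - 2) (the inverse function for #|F| = 2^n). *)
Definition F4 (F : finFieldType) (n : nat) (x : F) : F := x ^+ (2 ^ n - 2)%N.

From mathcomp Require Import all_boot all_algebra all_field.
From mathcomp Require Import ring.

Set Implicit Arguments.
Unset Strict Implicit.
Unset Printing Implicit Defensive.

Import GRing.Theory.
Local Open Scope ring_scope.

(* Over a field with 2^n >= 4 elements, X^(2^n - 2) is the inversion map (with
   0^-1 = 0).  In characteristic 2 the boomerang sum
   G(X+a+b) + G(X+b) + G(X+a) + G(X) is constant on each coset of the subgroup
   V = {0, a, b, a+b}, and vanishes identically when a = b.  For inversion and
   X outside V, multiplying by X(X+a)(X+b)(X+a+b) clears denominators and yields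
   the nonzero constant ab(a+b), so the sum vanishes only on V itself, and there
   exactly when a^-1 + b^-1 + (a+b)^-1 = 0, i.e. when (a/b)^2 + a/b + 1 = 0. *)

Lemma expf_card_sub2 (F : finFieldType) (x : F) :
  (2 < #|F|)%N -> x ^+ (#|F| - 2) = x^-1.
Proof.
move=> F_gt2; have [->|x0] := eqVneq x 0.
  by rewrite invr0 expr0n subn_eq0 leqNgt F_gt2.
apply: (mulIf x0); rewrite mulVf // -exprSr; apply: (mulIf x0).
by rewrite -exprSr -addn2 subnK 1?ltnW // expf_card mul1r.
Qed.

Definition boomerang_sum (V : zmodType) (G : V -> V) (a b X : V) : V :=
  G (X + a + b) + G (X + b) + G (X + a) + G X.

Lemma FBCTE (F : finFieldType) (G : F -> F) (a b : F) :
  FBCT G a b = #|[set X | boomerang_sum G a b X == 0]|.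
Proof. by []. Qed.

Section Char2.

Variable F : fieldType.
Hypothesis pcharF2 : 2 \in [pchar F].

Lemma boomerang_sum_diag (G : F -> F) (a X : F) : boomerang_sum G a a X = 0.
Proof.
by rewrite /boomerang_sum -(addrA X) addrr_pchar2 // addr0 addrK_pchar2 // addrr_pchar2.
Qed.

Lemma boomerang_sumDl (G : F -> F) (a b X : F) :
  boomerang_sum G a b (X + a) = boomerang_sum G a b X.
Proof. by rewrite /boomerang_sum addrK_pchar2 //; ring. Qed.

Lemma boomerang_sumDr (G : F -> F) (a b X : F) :
  boomerang_sum G a b (X + b) = boomerang_sum G a b X.
Proof.
by rewrite /boomerang_sum (addrAC _ a b) addrK_pchar2 // (addrAC X b a); ring.
Qed.

Lemma boomerang_sum_subgroup (G : F -> F) (a b X : F) :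
  X \in [:: 0; a; b; a + b] -> boomerang_sum G a b X = boomerang_sum G a b 0.
Proof.
rewrite !inE => /or4P[] /eqP->; rewrite // -[X in boomerang_sum _ _ _ X]add0r.
- exact: boomerang_sumDl.
- exact: boomerang_sumDr.
- by rewrite addrA boomerang_sumDr boomerang_sumDl.
Qed.

Lemma subgroup_prod_eq0 (a b X : F) :
  (X * (X + a) * (X + b) * (X + a + b) == 0) = (X \in [:: 0; a; b; a + b]).
Proof. by rewrite !mulf_eq0 -addrA !addr_eq0 !oppr_pchar2 // !inE !orbA. Qed.

Lemma subgroup_uniq (a b : F) :
  a != 0 -> b != 0 -> a != b -> uniq [:: 0; a; b; a + b].
Proof.
move=> a0 b0 ab; rewrite /= !inE !negb_or ![0 == _]eq_sym a0 b0 ab /=.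
rewrite addr_eq0 oppr_pchar2 // ab /=.
rewrite -{1}[a]addr0 (inj_eq (addrI a)) eq_sym b0.
by rewrite -{1}[b]add0r (inj_eq (addIr b)) eq_sym a0.
Qed.

Lemma boomerang_sum_inv_mul (a b X : F) :
  X * (X + a) * (X + b) * (X + a + b) != 0 ->
  boomerang_sum GRing.inv a b X * (X * (X + a) * (X + b) * (X + a + b))
    = a * b * (a + b).
Proof.
rewrite !mulf_eq0 !negb_or -!andbA => /and4P[X0 Xa0 Xb0 Xab0].
have two0 : 2 = 0 :> F := pcharf0 pcharF2.
(* In any characteristic the two sides differ by 2 X (2 X^2 + 3 X (a + b) + 3 a b + a^2 + b^2). *)
rewrite /boomerang_sum -[RHS]addr0.
rewrite -(mulr0 (X * (2 * X ^+ 2 + 3 * X * (a + b) + 3 * a * b + a ^+ 2 + b ^+ 2))).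
rewrite -{1}two0.
by field; rewrite X0 Xa0 Xb0 Xab0.
Qed.

Lemma boomerang_sum_inv0_mul (a b : F) :
  a != 0 -> b != 0 -> a != b ->
  boomerang_sum GRing.inv a b 0 * (a * b * (a + b))
    = b ^+ 2 * ((a / b) ^+ 2 + a / b + 1).
Proof.
move=> a0 b0 ab; have ab0 : a + b != 0 by rewrite addr_eq0 oppr_pchar2.
have two0 : 2 = 0 :> F := pcharf0 pcharF2.
rewrite /boomerang_sum !add0r invr0 addr0.
rewrite -[RHS]addr0 -(mulr0 (a * b)) -{1}two0.
by field; rewrite a0 b0 ab0.
Qed.

Lemma boomerang_sum_inv_eq0 (a b X : F) :
  a != 0 -> b != 0 -> a != b ->
  (boomerang_sum GRing.inv a b X == 0)
    = (X \in [:: 0; a; b; a + b]) && ((a / b) ^+ 2 + a / b + 1 == 0).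
Proof.
move=> a0 b0 ab; have ab0 : a + b != 0 by rewrite addr_eq0 oppr_pchar2.
have abab0 : a * b * (a + b) != 0 by rewrite !mulf_neq0.
have [XV|XnV] /= := boolP (X \in _).
  rewrite boomerang_sum_subgroup // -(mulIr_eq0 _ (mulIf abab0)).
  by rewrite boomerang_sum_inv0_mul // mulf_eq0 expf_eq0 (negbTE b0).
apply/negbTE/eqP => sum0; move: abab0.
by rewrite -(@boomerang_sum_inv_mul a b X) ?subgroup_prod_eq0 // sum0 mul0r eqxx.
Qed.

End Char2.

Lemma FBCT_inv (F : finFieldType) (a b : F) :
  2 \in [pchar F] -> a != 0 -> b != 0 ->
  FBCT GRing.inv a b =
    (if a == b then #|F|
     else if (a / b) ^+ 2 + a / b + 1 == 0 then 4%N else 0%N).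
Proof.
move=> pcharF2 a0 b0; rewrite FBCTE.
have [<-|ab] := eqVneq a b.
  by rewrite -cardsT; apply: eq_card => X; rewrite !inE boomerang_sum_diag ?eqxx.
case: ifP => quad0;
  under eq_finset => X do rewrite boomerang_sum_inv_eq0 // quad0 ?andbT ?andbF.
  by rewrite cardsE; apply/card_uniqP/subgroup_uniq.
by apply: eq_card0 => X; rewrite inE.
Qed.

Theorem mainTheorem13 (F : finFieldType) (n : nat)
  (hn : ~~ odd n) (hF : #|F| = (2 ^ n)%N) (a b : F)
  (ha : a != 0) (hb : b != 0) :
  FBCT (F4 n) a b =
    (if a == b then (2 ^ n)%N
     else if (a / b) ^+ 2 + a / b + 1 == 0 then 4%N
     else 0%N).
Proof.
have pcharF2 : 2 \in [pchar F] := card_finPcharP hF isT.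
(* Evenness rules out n = 1, where the exponent 2^n - 2 is 0. *)
have F_gt2 : (2 < #|F|)%N.
  have := finNzRing_gt1 F; rewrite hF; case: n hn {hF} => [|[|m]] //= _ _.
  by apply: (@leq_trans (2 ^ 2)); rewrite // leq_exp2l.
have -> : FBCT (F4 n) a b = FBCT GRing.inv a b.
  by apply: eq_card => X; rewrite !inE /F4 -hF !expf_card_sub2.
by rewrite FBCT_inv // hF.
Qed.
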